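(* For all $W\in\mathcal{C}$ and all $\bar\varphi\in\mathbb{R}$ we have $\mathcal{L}\big(W(\cdot+\bar\varphi)\big)=\mathcal{L}(W)$.
   Context: Let $\Phi:\mathbb{R}\to\mathbb{R}$ be twice continuously differentiable on $[-1,1]$ with: $\Phi'(-1)=-1$, $\Phi'(1)=1$; $\Phi''\ge0$ on $[-1,1]$; $\Phi(-1)=\Phi(1)$; $\Phi''(-1)<1$, $\Phi''(1)<1$; and $g_\Phi(w):=\int_{-1}^w(v-\Phi'(v))\,dv>0$ for all $w\in(-1,1)$. $(\mathcal{A}U)(\varphi)=\int_{\varphi-1/2}^{\varphi+1/2}U(s)\,ds$; $W_{\rm sh}(\varphi)=\mathrm{sgn}(\varphi)$; $\mathcal{H}=\{W\text{ measurable}: W_{\rm sh}-W\in L^2(\mathbb{R})\}$; $\mathcal{L}(W)=\int_{\mathbb{R}}(\tfrac12W^2-\Phi(\mathcal{A}W))-(\tfrac12W_{\rm sh}^2-\Phi(\mathcal{A}W_{\rm sh}))\,d\varphi$. $\mathcal{C}$ is the set of $W\in\mathcal{H}$ that are a.e. equal to a nondecreasing function with $W(\varphi)\to\pm1$ as $\varphi\to\pm\infty$. *)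

From HB Require Import structures.
From mathcomp Require Import all_boot all_order all_algebra.
From mathcomp Require Import all_classical all_reals all_analysis.
Set Implicit Arguments. Unset Strict Implicit. Unset Printing Implicit Defensive.
Import Order.TTheory GRing.Theory Num.Theory.
Import numFieldNormedType.Exports.
Local Open Scope classical_set_scope.
Local Open Scope ring_scope.

Section Defs.
Variable R : realType.
Notation mu := (@lebesgue_measure R).

Definition I11 : set R := [set x | -1 <= x <= 1].

(* f' is the derivative of f on the set A, in the sense of difference quotients
   with y -> x, y in A, y <> x (one-sided at endpoints of an interval). *)
Definition deriv_on (f f' : R -> R) (A : set R) : Prop :=
  forall x, A x ->
    (fun y => (f y - f x) / (y - x)) @ within A x^' --> f' x.

Definition g_Phi (dPhi : R -> R) (w : R) : R :=
  Rintegral mu [set v | -1 <= v <= w] (fun v => v - dPhi v).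

Definition Aop (U : R -> R) (phi : R) : R :=
  Rintegral mu [set s | phi - 2^-1 <= s <= phi + 2^-1] U.

Definition Wsh (phi : R) : R := Num.sg phi.

Definition in_H (W : R -> R) : Prop :=
  measurable_fun setT W /\
  (\int[mu]_x ((Wsh x - W x) ^+ 2)%:E < +oo)%E.

Definition in_C (W : R -> R) : Prop :=
  in_H W /\
  exists V : R -> R,
    {ae mu, forall x, W x = V x} /\
    {homo V : x y / x <= y} /\
    (V x @[x --> +oo%R] --> (1 : R)) /\
    (V x @[x --> -oo%R] --> (-1 : R)).

Definition L_Phi (Phi : R -> R) (W : R -> R) : \bar R :=
  \int[mu]_phi
    (((2^-1 * W phi ^+ 2 - Phi (Aop W phi))
      - (2^-1 * Wsh phi ^+ 2 - Phi (Aop Wsh phi))))%:E.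

End Defs.

From mathcomp Require Import all_boot all_order all_algebra.
From mathcomp Require Import all_classical all_reals all_analysis.
From mathcomp Require Import measurable_realfun.
From mathcomp.algebra_tactics Require Import ring lra.

(* Write the integrand of L(W) as (e_W - c) + (c - e_sh), where
   e_U = U^2/2 - Phi(A U) and c = 1/2 - Phi 1.  Outside [-1, 1] both W_sh
   and A W_sh equal sgn, so Phi(-1) = Phi(1) makes c - e_sh bounded and
   supported in [-1, 1], hence integrable; an integrable summand can be split
   off an extended-real integral even when e_W - c is not integrable.  The
   averaging operator A commutes with translations, so the shifted profile
   has energy density e_W(. + phibar), and the remaining integral is
   invariant by translation invariance of Lebesgue measure.  Only continuity
   of Phi on [-1, 1] and Phi(-1) = Phi(1) are used. *)

Set Implicit Arguments.
Unset Strict Implicit.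
Unset Printing Implicit Defensive.

Import Order.TTheory GRing.Theory Num.Theory.
Import numFieldNormedType.Exports.
Local Open Scope classical_set_scope.
Local Open Scope ring_scope.

Section integralD_integrable.
Context d (T : measurableType d) (R : realType) (mu : {measure set T -> \bar R}).
Implicit Types u k : T -> R.

Lemma funrposD_le u k x : (u \+ k)^\+ x <= u^\+ x + `|k x|.
Proof.
rewrite ge_max addr_ge0 ?funrpos_ge0 // andbT.
by apply: lerD; [rewrite le_max lexx | exact: ler_norm].
Qed.

Lemma integral_funrposD_lt_pinfty u k : measurable_fun setT u ->
  mu.-integrable setT (EFin \o k) ->
  (\int[mu]_x (u^\+ x)%:E < +oo -> \int[mu]_x ((u \+ k)^\+ x)%:E < +oo)%E.
Proof.
move=> mu_ ik upoo.
have mk : measurable_fun setT k by apply/measurable_EFinP; exact: measurable_int ik.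
have kfin : (\int[mu]_x `|k x|%:E < +oo)%E by case/integrableP: ik.
apply: le_lt_trans (lte_add_pinfty upoo kfin).
have mup : measurable_fun setT (EFin \o u^\+).
  exact/measurable_EFinP/measurable_funrpos.
have mkn : measurable_fun setT (EFin \o (Num.norm \o k)).
  exact/measurable_EFinP/measurableT_comp.
rewrite -ge0_integralD //; last by move=> x _; rewrite lee_fin funrpos_ge0.
apply: ge0_le_integral => //.
- by move=> x _; rewrite lee_fin funrpos_ge0.
- exact/measurable_EFinP/measurable_funrpos/measurable_funD.
- exact: emeasurable_funD.
- by move=> x _; rewrite lee_fin funrposD_le.
Qed.

Lemma integral_funrnegD_lt_pinfty u k : measurable_fun setT u ->
  mu.-integrable setT (EFin \o k) ->
  (\int[mu]_x (u^\- x)%:E < +oo -> \int[mu]_x ((u \+ k)^\- x)%:E < +oo)%E.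
Proof.
move=> mu_ ik; rewrite -!funrposN.
have -> : \- (u \+ k) = \- u \+ \- k by apply/funext => x /=; rewrite opprD.
apply: integral_funrposD_lt_pinfty; first exact: measurableT_comp.
by have := integrableN ik.
Qed.

Lemma integrable_funrposneg u : measurable_fun setT u ->
  (\int[mu]_x (u^\+ x)%:E < +oo)%E -> (\int[mu]_x (u^\- x)%:E < +oo)%E ->
  mu.-integrable setT (EFin \o u).
Proof.
move=> mu_ uP uN; apply/integrableP; split; first exact/measurable_EFinP.
rewrite (_ : (fun x => `|(EFin \o u) x|)%E = EFin \o (u^\+ + u^\-)); last first.
  by apply/funext => x; rewrite funrposDneg.
rewrite [X in (X < _)%E](ge0_integralD mu measurableT
    (f1 := fun x => (u^\+ x)%:E) (f2 := fun x => (u^\- x)%:E)) /=.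
- exact: lte_add_pinfty.
- by move=> x _; rewrite lee_fin funrpos_ge0.
- exact/measurable_EFinP/measurable_funrpos.
- by move=> x _; rewrite lee_fin funrneg_ge0.
- exact/measurable_EFinP/measurable_funrneg.
Qed.

Lemma integralD_integrable_r u k : measurable_fun setT u ->
  mu.-integrable setT (EFin \o k) ->
  (\int[mu]_x (u x + k x)%:E = \int[mu]_x (u x)%:E + \int[mu]_x (k x)%:E)%E.
Proof.
move=> mu_ ik.
have mw : measurable_fun setT (u \+ k).
  by apply: measurable_funD => //; apply/measurable_EFinP; exact: measurable_int ik.
have ikN : mu.-integrable setT (EFin \o \- k) by have := integrableN ik.
have uE : u = (u \+ k) \+ \- k by apply/funext => x /=; rewrite addrK.
have partsE f : (\int[mu]_x (f x)%:E =
    \int[mu]_x (f^\+ x)%:E - \int[mu]_x (f^\- x)%:E)%E.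
  by rewrite integralE funerpos funerneg.
have : (\int[mu]_x (k x)%:E)%E \is a fin_num.
  by have := integrable_fin_num measurableT ik.
rewrite fin_numE => /andP[kNy _].
have oppNy x : (x < +oo -> - x != -oo)%E by case: x.
(* In \bar R, x - +oo = -oo; and each part of u has a finite integral iff the
   same part of u + k has, because |k| is integrable. *)
have [uNoo|uNfin] := eqVneq (\int[mu]_x (u^\- x)%:E)%E +oo%E.
  have wNoo : (\int[mu]_x ((u \+ k)^\- x)%:E)%E = +oo%E.
    apply/eqP; rewrite -leye_eq leNgt; apply/negP => wNfin.
    by move: uNoo; rewrite uE => /eqP; rewrite lt_eqF // integral_funrnegD_lt_pinfty.
  by rewrite (partsE (u \+ k)) (partsE u) uNoo wNoo !addeNy addNye.
rewrite -ltey in uNfin.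
have [uPoo|uPfin] := eqVneq (\int[mu]_x (u^\+ x)%:E)%E +oo%E.
  have wPoo : (\int[mu]_x ((u \+ k)^\+ x)%:E)%E = +oo%E.
    apply/eqP; rewrite -leye_eq leNgt; apply/negP => wPfin.
    by move: uPoo; rewrite uE => /eqP; rewrite lt_eqF // integral_funrposD_lt_pinfty.
  have wNfin := integral_funrnegD_lt_pinfty mu_ ik uNfin.
  by rewrite (partsE (u \+ k)) (partsE u) uPoo wPoo !addye ?oppNy.
rewrite -ltey in uPfin.
by have := integralD measurableT (integrable_funrposneg mu_ uPfin uNfin) ik.
Qed.

Lemma integrable_bounded_support (f : T -> R) (D : set T) (K : R) :
  measurable D -> (mu D < +oo)%E -> measurable_fun setT f ->
  (forall x, `|f x| <= K) -> (forall x, ~ D x -> f x = 0) ->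
  mu.-integrable setT (EFin \o f).
Proof.
move=> mD Dfin mf fK f0; apply/integrableP; split; first exact/measurable_EFinP.
apply: (@le_lt_trans _ _ (\int[mu]_x ((fun=> K%:E) \_ D) x)%E).
  apply: ge0_le_integral => //.
  - by apply/measurable_EFinP; exact: measurableT_comp.
  - by apply/(measurable_restrictT _ mD); exact: measurable_cst.
  - move=> x _; rewrite patchE; case: ifPn => [_|/negP Dx]; first by rewrite lee_fin.
    by rewrite /= f0 ?normr0 // => /mem_set.
have Dfin' : mu D \is a fin_num by rewrite ge0_fin_numE.
by rewrite -integral_mkcond integral_cst // -(fineK Dfin') -EFinM ltry.
Qed.
End integralD_integrable.

Section lebesgue_shift.
Context {R : realType}.
Local Notation mu := (@lebesgue_measure R).
Local Notation RR := (measurableTypeR R).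

Lemma measurable_addr (a : R) : measurable_fun setT (fun x : RR => (x + a : RR)%R).
Proof. exact: measurable_funD. Qed.

Lemma lebesgue_measureD (a : R) (A : set RR) : measurable A ->
  pushforward mu (fun x : RR => (x + a : RR)%R) A = mu A.
Proof.
move=> mA; apply/esym/lebesgue_measure_unique => //=.
  exact: measurable_addr.
move=> _ _ [[x y]] _ <-; rewrite /pushforward.
have -> : (fun z => z + a) @^-1` `]x, y]%classic = `]x - a, y - a]%classic.
  by apply/seteqP; split => z /=; rewrite !in_itv /= ?lerBrDr ?ltrBlDr.
rewrite !lebesgue_measure_itv /= !lte_fin ltrD2r.
by case: ifP => // _; congr (_%:E); lra.
Qed.

Local Open Scope ereal_scope.

Lemma ge0_integral_shift (a : R) (f : RR -> \bar R) :
  measurable_fun setT f -> (forall x, 0 <= f x) ->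
  \int[mu]_x f (x + a)%R = \int[mu]_x f x.
Proof.
move=> mf f0.
have := ge0_integral_pushforward (measurable_addr a) mu measurableT mf (fun y _ => f0 y).
rewrite preimage_setT => <-.
apply: eq_measure_integral; first exact: measurable_addr.
by move=> ? A mA _; exact: lebesgue_measureD.
Qed.

Lemma integral_shift (a : R) (f : RR -> \bar R) : measurable_fun setT f ->
  \int[mu]_x f (x + a)%R = \int[mu]_x f x.
Proof.
move=> mf; rewrite integralE [RHS]integralE.
rewrite -(ge0_integral_shift a (measurable_funepos mf) (funepos_ge0 f)).
rewrite -(ge0_integral_shift a (measurable_funeneg mf) (funeneg_ge0 f)).
by rewrite (funepos_comp f (fun x => x + a)%R) (funeneg_comp f (fun x => x + a)%R).
Qed.
End lebesgue_shift.

Section window_average.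
Context {R : realType}.
Local Notation mu := (@lebesgue_measure R).
Implicit Types (U V : R -> R) (phi : R).

Definition window phi : set R := [set s | phi - 2^-1 <= s <= phi + 2^-1].

Lemma AopE U phi : Aop U phi = \int[mu]_(s in window phi) U s.
Proof. by []. Qed.

Lemma measurable_window phi : measurable (window phi).
Proof. by rewrite /window -set_itvcc; exact: measurable_itv. Qed.

Lemma lebesgue_measure_window phi : mu (window phi) = 1%:E.
Proof.
rewrite /window -set_itvcc lebesgue_measure_itv /= lte_fin.
by rewrite ifT; [congr (_%:E); lra | lra].
Qed.

Lemma integral_window_cst (c : R) phi : (\int[mu]_(s in window phi) c%:E = c%:E)%E.
Proof.
rewrite (integral_cst mu (measurable_window phi)).
by transitivity (c%:E * 1%:E)%E; [congr (_ * _)%E; exact: lebesgue_measure_window | rewrite mule1].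
Qed.

Lemma integrable_window U (M : R) phi : measurable_fun setT U ->
  (forall s, `|U s| <= M) -> mu.-integrable (window phi) (EFin \o U).
Proof.
move=> mU UM; apply/integrableP; split.
  by apply/measurable_EFinP; exact: measurable_funS mU.
apply: (@le_lt_trans _ _ (\int[mu]_(s in window phi) M%:E)%E).
  apply: ge0_le_integral => //.
  - exact: measurable_window.
  - by apply/measurable_EFinP/measurableT_comp => //; exact: measurable_funS mU.
  - by move=> s _; rewrite lee_fin.
by rewrite integral_window_cst ltry.
Qed.

Lemma Aop_eq_cst U (c : R) phi : (forall s, window phi s -> U s = c) -> Aop U phi = c.
Proof.
move=> Uc; rewrite AopE /Rintegral (eq_integral (fun=> c%:E)).
  by rewrite integral_window_cst.
by move=> s /set_mem /Uc ->.
Qed.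

Lemma Aop_le U V (M : R) phi : measurable_fun setT U -> measurable_fun setT V ->
  (forall s, `|U s| <= M) -> (forall s, `|V s| <= M) ->
  (forall s, U s <= V s) -> Aop U phi <= Aop V phi.
Proof.
move=> mU mV UM VM UV; apply: le_Rintegral => //; first exact: measurable_window.
- exact: integrable_window UM.
- exact: integrable_window VM.
Qed.

Lemma Aop_shift U (a phi : R) : measurable_fun setT U ->
  Aop (fun s => U (s + a)) phi = Aop U (phi + a).
Proof.
move=> mU; rewrite !AopE /Rintegral; congr fine.
rewrite integral_mkcond [RHS]integral_mkcond.
have mUw : measurable_fun (setT : set (measurableTypeR R)) ((EFin \o U) \_ (window (phi + a))).
  apply/(measurable_restrictT _ (measurable_window _)).
  by apply/measurable_EFinP; exact: measurable_funS mU.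
rewrite -(integral_shift a mUw); apply: eq_integral => x _; rewrite !patchE.
congr (if _ then _ else _); apply/idP/idP => /set_mem h; apply/mem_set; move: h;
  by rewrite /window /= (addrAC phi a (- 2^-1)) (addrAC phi a 2^-1) !lerD2r.
Qed.

Lemma Aop_bound U (m M phi : R) : measurable_fun setT U ->
  (forall s, m <= U s <= M) -> m <= Aop U phi <= M.
Proof.
move=> mU UmM.
have UK s : `|U s| <= `|m| + `|M|.
  have /andP[Um UM] := UmM s; rewrite ler_norml.
  have := ler_norm m; have := ler_norm M; have := normr_ge0 m; have := normr_ge0 M.
  have := ler_norm (- m); rewrite normrN; lra.
have Acst (c : R) : Aop (fun=> c) phi = c by exact: Aop_eq_cst.
apply/andP; split.
  rewrite -[X in X <= _]Acst; apply: (@Aop_le _ _ (`|m| + `|M|)) => //.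
  - by move=> _; rewrite lerDl.
  - by move=> s; case/andP: (UmM s).
rewrite -[X in _ <= X]Acst; apply: (@Aop_le _ _ (`|m| + `|M|)) => //.
- by move=> _; rewrite lerDr.
- by move=> s; case/andP: (UmM s).
Qed.

Lemma Aop_nondecreasing U (K : R) : {homo U : x y / x <= y} ->
  (forall s, `|U s| <= K) -> {homo Aop U : x y / x <= y}.
Proof.
move=> ndU UK p q pq.
have mU : measurable_fun setT U by exact: nondecreasing_measurable.
have -> : q = p + (q - p) by rewrite addrC subrK.
rewrite -Aop_shift //; apply: (@Aop_le _ _ K) => //.
- by apply: nondecreasing_measurable => // s t st; apply: ndU; rewrite lerD2r.
- by move=> s; rewrite ndU // lerDl subr_ge0.
Qed.

Lemma Aop_ae_eq U V : measurable_fun setT U -> measurable_fun setT V ->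
  {ae mu, forall x, U x = V x} -> Aop U =1 Aop V.
Proof.
move=> mU mV UV phi; rewrite !AopE /Rintegral; congr fine.
apply: ae_eq_integral; first exact: measurable_window.
- by apply/measurable_EFinP; exact: measurable_funS mU.
- by apply/measurable_EFinP; exact: measurable_funS mV.
- by apply: (@filterS _ _ (ae_filter_ringOfSetsType mu) _ _ _ UV) => x ->.
Qed.
End window_average.

Lemma deriv_on_continuous (R : realType) (f f' : R -> R) (A : set R) :
  deriv_on f f' A -> {within A, continuous f}.
Proof.
move=> df; apply/subspace_continuousP => x Ax.
have x_id : (fun y => y - x) @ within A x^' --> 0.
  rewrite -(subrr x); apply: cvgB; last exact: cvg_cst.
  apply: cvg_trans (cvg_within _) _; exact: cvg_within.
have f_x : (fun y => f y - f x) @ within A x^' --> 0.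
  rewrite -(mulr0 (f' x)); apply: cvg_trans (cvgM (df x Ax) x_id).
  apply: near_eq_cvg; rewrite near_withinE; near=> y => Ay.
  rewrite /= divfK // subr_eq0; near: y; exact: nbhs_dnbhs_neq.
apply/cvgrPdist_lt => e e0.
move/cvgrPdist_lt/(_ e e0): f_x; rewrite !near_withinE => fxe.
near=> y => Ay.
have [->|yx] := eqVneq y x; first by rewrite subrr normr0.
suff : `|0 - (f y - f x)| < e by rewrite sub0r normrN distrC.
move: yx Ay; near: y; move: fxe.
by apply: filterS => y + yx; apply.
Unshelve. all: by end_near.
Qed.

Lemma continuous_itvcc_bounded (R : realType) (f : R -> R) (a b : R) : a <= b ->
  {within `[a, b], continuous f} -> exists M, forall x, a <= x <= b -> `|f x| <= M.
Proof.
move=> ab cf.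
have [xM _ fxM] := EVT_max ab cf; have [xm _ fxm] := EVT_min ab cf.
exists (`|f xM| + `|f xm|) => x xab.
have /fxM xM_max : x \in `[a, b] by rewrite in_itv.
have /fxm xm_min : x \in `[a, b] by rewrite in_itv.
rewrite ler_norml; have := ler_norm (f xM); have := ler_norm (- f xm).
by rewrite normrN; have := normr_ge0 (f xM); have := normr_ge0 (f xm); lra.
Qed.

Lemma nondecreasing_cvg_bounds (R : realType) (V : R -> R) (l l' : R) :
  {homo V : x y / x <= y} ->
  V x @[x --> -oo] --> l -> V x @[x --> +oo] --> l' -> forall x, l <= V x <= l'.
Proof.
move=> ndV Vl Vl' x; apply/andP; split.
  apply: (cvgr_to_le Vl); exists x; split; first exact: num_real.
  by move=> y /ltW /ndV.
apply: (cvgr_to_ge Vl'); exists x; split; first exact: num_real.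
by move=> y /ltW /ndV.
Qed.

Section sign_profile.
Context {R : realType}.

Lemma Wsh_nondecreasing : {homo @Wsh R : x y / x <= y}.
Proof. by move=> x y xy; rewrite /Wsh; case: sgrP => hx; case: sgrP => hy //; lra. Qed.

Lemma Wsh_bound (x : R) : -1 <= Wsh x <= 1.
Proof. by rewrite /Wsh; case: sgrP => _; lra. Qed.

Lemma measurable_Wsh : measurable_fun setT (@Wsh R).
Proof. exact: nondecreasing_measurable Wsh_nondecreasing. Qed.

Lemma Aop_Wsh_gt (x : R) : 2^-1 < x -> Aop (@Wsh R) x = 1.
Proof. by move=> x_gt; apply: Aop_eq_cst => s /andP[s_ge _]; rewrite /Wsh gtr0_sg //; lra. Qed.

Lemma Aop_Wsh_lt (x : R) : x < - 2^-1 -> Aop (@Wsh R) x = -1.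
Proof. by move=> x_lt; apply: Aop_eq_cst => s /andP[_ s_le]; rewrite /Wsh ltr0_sg //; lra. Qed.
End sign_profile.

Section energy.
Context {R : realType}.
Local Notation mu := (@lebesgue_measure R).
Variable Phi : R -> R.
Hypothesis Phi_cont : {within @I11 R, continuous Phi}.

Definition energy (U : R -> R) (phi : R) := 2^-1 * U phi ^+ 2 - Phi (Aop U phi).

Lemma energy_shift (U : R -> R) (a phi : R) : measurable_fun setT U ->
  energy (fun s => U (s + a)) phi = energy U (phi + a).
Proof. by move=> mU; rewrite /energy Aop_shift. Qed.

Lemma measurable_I11 : measurable (@I11 R).
Proof. by rewrite /I11 -set_itvcc; exact: measurable_itv. Qed.

Lemma lebesgue_measure_I11 : mu (@I11 R) = 2%:E.
Proof.
rewrite /I11 -set_itvcc lebesgue_measure_itv /= lte_fin ifT; last lra.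
by congr (_%:E); lra.
Qed.

Lemma measurable_Phi_Aop (U : R -> R) : {homo U : x y / x <= y} ->
  (forall x, -1 <= U x <= 1) -> measurable_fun setT (fun x => Phi (Aop U x)).
Proof.
move=> ndU U1.
have mU : measurable_fun setT U by exact: nondecreasing_measurable.
apply: (@measurable_comp _ _ _ _ _ _ (@I11 R)).
- exact: measurable_I11.
- by move=> _ [x _ <-]; exact: Aop_bound.
- exact: subspace_continuous_measurable_fun measurable_I11 Phi_cont.
- apply: nondecreasing_measurable => //; apply: (Aop_nondecreasing (K := 1)) => //.
  by move=> s; rewrite ler_norml U1.
Qed.

Lemma measurable_energy W : in_C W -> measurable_fun setT (energy W).
Proof.
case=> -[mW _] [V [WV [ndV [Vy VNy]]]].
have mV : measurable_fun setT V by exact: nondecreasing_measurable.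
apply: measurable_funB.
  by apply: measurable_funM; [exact: measurable_cst | exact: measurable_funX].
rewrite (_ : (fun x => Phi (Aop W x)) = (fun x => Phi (Aop V x))); last first.
  by apply/funext => x; rewrite (Aop_ae_eq mW mV WV).
exact: measurable_Phi_Aop (nondecreasing_cvg_bounds ndV VNy Vy).
Qed.

(* [2^-1 - Phi 1] is the value of [energy Wsh] outside [-1, 1]. *)
Lemma integrable_energy_Wsh : Phi (-1) = Phi 1 ->
  mu.-integrable setT (EFin \o (fun x => (2^-1 - Phi 1) - energy (@Wsh R) x)).
Proof.
move=> Phi_sym.
have [M PhiM] : exists M, forall x, -1 <= x <= 1 -> `|Phi x| <= M.
  by apply: continuous_itvcc_bounded; [lra | rewrite -set_itvcc].
apply: (@integrable_bounded_support _ _ _ mu _ (@I11 R) (`|2^-1 - Phi 1| + 2^-1 + M)).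
- exact: measurable_I11.
- by change (mu (@I11 R) < +oo)%E; rewrite lebesgue_measure_I11 ltry.
- apply: measurable_funB; first exact: measurable_cst.
  apply: measurable_funB.
    apply: measurable_funM; first exact: measurable_cst.
    exact: measurable_funX measurable_Wsh.
  exact: measurable_Phi_Aop Wsh_nondecreasing Wsh_bound.
- move=> x; rewrite /energy.
  have /andP[Wge Wle] := Wsh_bound x.
  have /andP[P1 P2] : - M <= Phi (Aop (@Wsh R) x) <= M.
    by rewrite -ler_norml; apply: PhiM; exact: Aop_bound measurable_Wsh Wsh_bound.
  have W2ge : 0 <= Wsh x ^+ 2 by exact: sqr_ge0.
  have W2le : Wsh x ^+ 2 <= 1 by nra.
  set c := 2^-1 - Phi 1; have := ler_norm c; have := ler_norm (- c); rewrite normrN.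
  by rewrite ler_norml; lra.
- move=> x; rewrite /I11 /= => /negP; rewrite negb_and -!ltNge => /orP[x_lt|x_gt].
    rewrite /energy Aop_Wsh_lt; last lra.
    by rewrite /Wsh ltr0_sg; [rewrite -Phi_sym sqrrN expr1n mulr1 subrr | lra].
  rewrite /energy Aop_Wsh_gt; last lra.
  by rewrite /Wsh gtr0_sg; [rewrite expr1n mulr1 subrr | lra].
Qed.
End energy.

Theorem corollary3p10 (R : realType) (Phi dPhi ddPhi : R -> R)
  (hPhi1 : deriv_on Phi dPhi (@I11 R))
  (hPhi2 : deriv_on dPhi ddPhi (@I11 R))
  (hPhi2c : {within @I11 R, continuous ddPhi})
  (hdm : dPhi (-1) = -1) (hdp : dPhi 1 = 1)
  (hconv : forall x, I11 x -> 0 <= ddPhi x)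
  (hsym : Phi (-1) = Phi 1)
  (hddm : ddPhi (-1) < 1) (hddp : ddPhi 1 < 1)
  (hg : forall w : R, -1 < w < 1 -> 0 < g_Phi dPhi w)
  (W : R -> R) (hW : in_C W) (phibar : R) :
  L_Phi Phi (fun phi => W (phi + phibar)) = L_Phi Phi W.
Proof.
have Phi_cont := deriv_on_continuous hPhi1.
have mW : measurable_fun setT W by case: hW => -[].
pose c := 2^-1 - Phi 1.
have Lsplit U : L_Phi Phi U =
    (\int[lebesgue_measure]_x ((energy Phi U x - c) + (c - energy Phi (@Wsh R) x))%:E)%E.
  by apply: eq_integral => x _; congr EFin; rewrite /energy /c; ring.
have me : measurable_fun (setT : set (measurableTypeR R)) (fun x => energy Phi W x - c).
  by apply: measurable_funB; [exact: measurable_energy | exact: measurable_cst].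
have int_sh := integrable_energy_Wsh Phi_cont hsym.
have me_shift : measurable_fun (setT : set (measurableTypeR R))
    (fun x => energy Phi W (x + phibar) - c).
  exact: measurableT_comp me (measurable_addr phibar).
rewrite !Lsplit; under eq_integral => x _ do rewrite energy_shift //.
rewrite (integralD_integrable_r me_shift int_sh) (integralD_integrable_r me int_sh).
congr (_ + _)%E.
exact: (integral_shift phibar (f := fun x => (energy Phi W x - c)%:E))
  (measurableT_comp _ me).
Qed.
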